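(* (i) If the coin process satisfies $\overline H(\mathbf X)=\underline H(\mathbf X)=H(\mathbf X)>0$, then for every target process $\mathbf Y$, \[R^\star_{\mathrm{int}}(\mathbf X,\mathbf Y)=R^\star(\mathbf X,\mathbf Y)=\frac{\overline H(\mathbf Y)}{H(\mathbf X)}.\] (ii) If the target process satisfies $\overline H(\mathbf Y)=\underline H(\mathbf Y)=H(\mathbf Y)$ and the coin process satisfies $\underline H(\mathbf X)>0$, then \[R^\star_{\mathrm{int}}(\mathbf X,\mathbf Y)=R^\star(\mathbf X,\mathbf Y)=\frac{H(\mathbf Y)}{\underline H(\mathbf X)}.\]
   Context: Logarithms are base 2. $\mathcal X$, $\mathcal Y$ are finite; $\mathbf X=\{X^m\}$ (coin) and $\mathbf Y=\{Y^n\}$ (target) are arbitrary processes given by consistent distributions. $\overline H(\mathbf X)=\inf\{\lambda:\lim_n\Pr(\frac1n\log\frac{1}{P_{X^n}(X^n)}\ge\lambda)=0\}$, $\underline H(\mathbf X)=\sup\{\lambda:\lim_n\Pr(\frac1n\log\frac{1}{P_{X^n}(X^n)}\le\lambda)=0\}$, $H(\mathbf X)=\limsup_n\frac1nH(X^n)$; likewise for $\mathbf Y$ (when $\overline H=\underline H$ the limit defining $H$ exists and equals them). A random number generation algorithm for $Y^n$ is a map $\phi:\bigcup_{i\ge0}\mathcal X^i\to\{\bot\}\cup\mathcal Y^n$ whose leaves (finite $s$ with $\phi(s)\in\mathcal Y^n$ and $\phi(s')=\bot$ for all proper prefixes $s'$) satisfy $\sum_{\text{leaves }s:\phi(s)=y^n}P_{X^{|s|}}(s)=P_{Y^n}(y^n)$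 for all $y^n$; its stopping time is the length of the leaf reached by $X_1,X_2,\dots$ ($\infty$ if none). For algorithms $\phi_n$ generating $Y^n$ with stopping times $T_n$, $R$ is achievable if $\lim_n\Pr(T_n>nR)=0$; $R^\star$ is the infimum achievable rate over all valid algorithms and $R^\star_{\mathrm{int}}$ that for the interval algorithm. Interval algorithm: with $\mathcal X=\{1,\dots,M\}$, $\mathcal I_\bot=[0,1)$, $\mathcal I_{sx}=[\underline\alpha_s+(\overline\alpha_s-\underline\alpha_s)\sum_{k<x}P_{X_{i+1}|X^i}(k|s),\ \underline\alpha_s+(\overline\alpha_s-\underline\alpha_s)\sum_{k\le x}P_{X_{i+1}|X^i}(k|s))$ for $s\in\mathcal X^i$ with $\mathcal I_s=[\underline\alpha_s,\overline\alpha_s)$; $\mathcal J_t$ for $t\in\mathcal Y^j$ likewise from $P_{Y_{j+1}|Y^j}$; stop at the first $m$ with $\mathcal I_{X^m}\subseteq\mathcal J_{y^n}$ for some $y^n$ and output that $y^n$. *)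

From Stdlib Require Import Reals Lra Lia List Arith ZArith.
Import ListNotations.
Open Scope R_scope.

(** Alphabets are {0,...,M-1}; finite strings are [list nat]. *)
Definition valid (M : nat) (s : list nat) : Prop := Forall (fun a => (a < M)%nat) s.

Fixpoint words (M n : nat) : list (list nat) :=
  match n with
  | O => [ [] ]
  | S k => flat_map (fun w => map (fun a => w ++ [a]) (seq 0 M)) (words M k)
  end.

Definition sumR {A : Type} (f : A -> R) (l : list A) : R :=
  fold_right (fun x acc => f x + acc) 0 l.

Definition log2 (x : R) : R := ln x / ln 2.

(** A process = consistent family of distributions P_{X^n}, encoded as one
    function on finite strings: P s = P_{X^{|s|}}(s). *)
Definition is_process (M : nat) (P : list nat -> R) : Prop :=
  P [] = 1 /\
  (forall s, valid M s -> 0 <= P s) /\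
  (forall s, valid M s -> sumR (fun a => P (s ++ [a])) (seq 0 M) = P s).

Definition is_inf (E : R -> Prop) (m : R) : Prop :=
  (forall x, E x -> m <= x) /\ (forall m', (forall x, E x -> m' <= x) -> m' <= m).
Definition is_sup (E : R -> Prop) (m : R) : Prop :=
  (forall x, E x -> x <= m) /\ (forall m', (forall x, E x -> x <= m') -> m <= m').

Definition is_limsup (u : nat -> R) (l : R) : Prop :=
  forall eps, eps > 0 ->
    (exists N, forall n, (n >= N)%nat -> u n < l + eps) /\
    (forall N, exists n, (n >= N)%nat /\ u n > l - eps).

Definition info (P : list nat -> R) (n : nat) (w : list nat) : R :=
  / INR n * log2 (/ P w).

Definition spec_up (M : nat) (P : list nat -> R) (lam : R) : Prop :=
  Un_cv (fun n => sumR (fun w => if Rle_dec lam (info P n w) then P w else 0)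
                       (words M n)) 0.

Definition spec_low (M : nat) (P : list nat -> R) (lam : R) : Prop :=
  Un_cv (fun n => sumR (fun w => if Rle_dec (info P n w) lam then P w else 0)
                       (words M n)) 0.

Definition Hbar (M : nat) (P : list nat -> R) (h : R) : Prop := is_inf (spec_up M P) h.
Definition Hund (M : nat) (P : list nat -> R) (h : R) : Prop := is_sup (spec_low M P) h.

Definition entropy (M : nat) (P : list nat -> R) (n : nat) : R :=
  sumR (fun w => if Rle_dec (P w) 0 then 0 else - (P w * log2 (P w))) (words M n).

Definition Hrate (M : nat) (P : list nat -> R) (h : R) : Prop :=
  is_limsup (fun n => / INR n * entropy M P n) h.

(** Algorithms: phi : X^* -> {bot} + Y^n, bot = None. *)
Definition algo := list nat -> option (list nat).

Definition is_some {A} (o : option A) : bool := match o with Some _ => true | None => false end.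
Definition is_none {A} (o : option A) : bool := negb (is_some o).

Definition leafb (phi : algo) (s : list nat) : bool :=
  is_some (phi s) && forallb (fun k => is_none (phi (firstn k s))) (seq 0 (length s)).

Definition leaf_mass_to (MX : nat) (PX : list nat -> R) (phi : algo) (y : list nat) (j : nat) : R :=
  sumR (fun s => if leafb phi s then
                   match phi s with
                   | Some y' => if list_eq_dec Nat.eq_dec y' y then PX s else 0
                   | None => 0
                   end
                 else 0) (words MX j).

(** mass of all leaves of length j = Pr(T = j) *)
Definition leaf_mass (MX : nat) (PX : list nat -> R) (phi : algo) (j : nat) : R :=
  sumR (fun s => if leafb phi s then PX s else 0) (words MX j).

Definition gen_alg (MX : nat) (PX : list nat -> R) (MY : nat) (PY : list nat -> R)
    (n : nat) (phi : algo) : Prop :=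
  (forall s y, valid MX s -> phi s = Some y -> length y = n /\ valid MY y) /\
  (forall y, length y = n -> valid MY y -> infinite_sum (leaf_mass_to MX PX phi y) (PY y)).

(** Pr(T <= t) for real t (T = stopping time, = infinity if no leaf reached) *)
Definition prob_stop_le (MX : nat) (PX : list nat -> R) (phi : algo) (t : R) : R :=
  sumR (fun j => if Rle_dec (INR j) t then leaf_mass MX PX phi j else 0)
       (seq 0 (S (Z.to_nat (up t)))).

Definition prob_stop_gt (MX : nat) (PX : list nat -> R) (phi : algo) (t : R) : R :=
  1 - prob_stop_le MX PX phi t.

Definition achievable (MX : nat) (PX : list nat -> R) (MY : nat) (PY : list nat -> R) (r : R) : Prop :=
  exists phi : nat -> algo,
    (forall n, gen_alg MX PX MY PY n (phi n)) /\
    Un_cv (fun n => prob_stop_gt MX PX (phi n) (INR n * r)) 0.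

Definition cumcond (P : list nat -> R) (pre : list nat) (x : nat) : R :=
  sumR (fun k => P (pre ++ [k]) / P pre) (seq 0 x).

(* I_{pre ++ rest} computed from I_pre = [lo, hi) *)
Fixpoint ivl (P : list nat -> R) (pre : list nat) (lo hi : R) (rest : list nat) : R * R :=
  match rest with
  | [] => (lo, hi)
  | x :: r =>
      ivl P (pre ++ [x]) (lo + (hi - lo) * cumcond P pre x)
                         (lo + (hi - lo) * cumcond P pre (S x)) r
  end.

Definition interval (P : list nat -> R) (s : list nat) : R * R := ivl P [] 0 1 s.

(* [a,b) subset [c,d) as sets of reals *)
Definition subsetb (I J : R * R) : bool :=
  let (a, b) := I in let (c, d) := J in
  if Rle_dec b a then true
  else if Rle_dec c a then (if Rle_dec b d then true else false) else false.

(** interval algorithm for Y^n: output (the first, in enumeration order) y^n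
    with I_s inside J_{y^n}, if any *)
Definition interval_alg (PX : list nat -> R) (MY : nat) (PY : list nat -> R) (n : nat) : algo :=
  fun s => find (fun y => subsetb (interval PX s) (interval PY y)) (words MY n).

Definition int_achievable (MX : nat) (PX : list nat -> R) (MY : nat) (PY : list nat -> R) (r : R) : Prop :=
  Un_cv (fun n => prob_stop_gt MX PX (interval_alg PX MY PY n) (INR n * r)) 0.

From Stdlib Require Import Reals Lra Lia List Bool ZArith Classical.
Import ListNotations.
Open Scope R_scope.

(** Write [T_n] for the stopping time of an algorithm generating [Y^n] from
   the coin [X], and [thresh n k = 2^(-n k)].  Everything rests on two
   information-spectrum estimates, valid for every [m] and every threshold [d]:

   - converse (any valid algorithm, [key_inequality]): a coin string of
     length [m] that already produced an output [y] has [P_X(s) <= P_Y(y)],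
     hence  Pr(T_n <= m) <= Pr(P_X(X^m) <= d) + Pr(P_Y(Y^n) > d);
   - achievability (interval algorithm, [unstopped_mass_bound]): a coin
     interval of length [<= e] that is not yet inside a target interval
     straddles an endpoint of a target interval, hence
     Pr(T_n > m) <= Pr(P_X(X^m) > e) + Pr(P_Y(Y^n) <= d) + 4 e / d.

   With [m ~ n r], [d = thresh n lam], [e = thresh m kap] and the
   characterisations of the spectral entropies by these tail probabilities
   ([Hbar_above], [Hbar_below], [Hund_below], [Hund_above]), the converse
   gives [r >= Hbar(Y)/Hbar(X)] and [r >= Hund(Y)/Hund(X)], and achievability
   gives every [r > Hbar(Y)/Hund(X)].  The same overlap estimates show that
   the interval algorithm is a valid generator as soon as [Hund(X) > 0]
   ([interval_alg_valid]).  The bounds coincide when [Hbar(X) = Hund(X)]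
   (part (i)) or [Hbar(Y) = Hund(Y)] (part (ii)). *)

Lemma sumR_app {A} (f : A -> R) l1 l2 : sumR f (l1 ++ l2) = sumR f l1 + sumR f l2.
Proof. induction l1; simpl; [lra|]. unfold sumR in *; simpl. rewrite IHl1. lra. Qed.

Lemma sumR_ext {A} (f g : A -> R) l : (forall x, In x l -> f x = g x) -> sumR f l = sumR g l.
Proof.
  induction l; intros H; simpl; auto. unfold sumR in *; simpl.
  rewrite H by (left; auto). rewrite IHl; auto. intros; apply H; right; auto.
Qed.

Lemma sumR_le {A} (f g : A -> R) l : (forall x, In x l -> f x <= g x) -> sumR f l <= sumR g l.
Proof.
  induction l; intros H; unfold sumR in *; simpl; [lra|].
  assert (f a <= g a) by (apply H; left; auto).
  assert (fold_right (fun x acc => f x + acc) 0 l <= fold_right (fun x acc => g x + acc) 0 l)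
    by (apply IHl; intros; apply H; right; auto).
  lra.
Qed.

Lemma sumR_nonneg {A} (f : A -> R) l : (forall x, In x l -> 0 <= f x) -> 0 <= sumR f l.
Proof.
  intros H. rewrite <- (sumR_le (fun _ => 0) f l H). clear H.
  induction l; unfold sumR in *; simpl; lra.
Qed.

Lemma sumR_plus {A} (f g : A -> R) l : sumR (fun x => f x + g x) l = sumR f l + sumR g l.
Proof. induction l; unfold sumR in *; simpl; [lra|]. rewrite IHl. lra. Qed.

Lemma sumR_minus {A} (f g : A -> R) l : sumR (fun x => f x - g x) l = sumR f l - sumR g l.
Proof. induction l; unfold sumR in *; simpl; [lra|]. rewrite IHl. lra. Qed.

Lemma sumR_scal {A} (f : A -> R) c l : sumR (fun x => c * f x) l = c * sumR f l.
Proof. induction l; unfold sumR in *; simpl; [lra|]. rewrite IHl. lra. Qed.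

Lemma sumR_zero {A} (l : list A) : sumR (fun _ => 0) l = 0.
Proof. induction l; unfold sumR in *; simpl; [lra|]. rewrite IHl. lra. Qed.

Lemma sumR_map {A B} (f : B -> R) (g : A -> B) l : sumR f (map g l) = sumR (fun x => f (g x)) l.
Proof. induction l; unfold sumR in *; simpl; auto. rewrite IHl; auto. Qed.

Lemma sumR_flat_map {A B} (f : B -> R) (g : A -> list B) l :
  sumR f (flat_map g l) = sumR (fun x => sumR f (g x)) l.
Proof. induction l; simpl; auto. rewrite sumR_app, IHl. reflexivity. Qed.

Lemma sumR_swap {A B} (f : A -> B -> R) l1 l2 :
  sumR (fun x => sumR (f x) l2) l1 = sumR (fun y => sumR (fun x => f x y) l1) l2.
Proof.
  induction l1; simpl. { rewrite sumR_zero; auto. }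
  change (sumR (f a) l2 + sumR (fun x => sumR (f x) l2) l1 =
          sumR (fun y => f a y + sumR (fun x => f x y) l1) l2).
  rewrite IHl1, sumR_plus. reflexivity.
Qed.

Lemma sumR_ge_term {A} (f : A -> R) l x :
  In x l -> (forall y, In y l -> 0 <= f y) -> f x <= sumR f l.
Proof.
  induction l; intros Hi H; [contradiction|]. simpl in Hi.
  change (f x <= f a + sumR f l).
  assert (0 <= f a) by (apply H; simpl; auto).
  assert (0 <= sumR f l) by (apply sumR_nonneg; intros; apply H; simpl; auto).
  destruct Hi as [->|Hi]; [lra|].
  assert (f x <= sumR f l) by (apply IHl; auto; intros; apply H; simpl; auto). lra.
Qed.

Lemma sumR_seq_S f n : sumR f (seq 0 (S n)) = sumR f (seq 0 n) + f n.
Proof. rewrite seq_S, sumR_app. unfold sumR; simpl. lra. Qed.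

Lemma sumR_telescope (g : nat -> R) n : sumR (fun x => g (S x) - g x) (seq 0 n) = g n - g 0%nat.
Proof. induction n. { unfold sumR; simpl; lra. } rewrite sumR_seq_S, IHn. lra. Qed.

Lemma sumR_delta {A} (eqd : forall x y : A, {x = y} + {x <> y}) (g : A -> R) l a :
  NoDup l -> In a l -> sumR (fun b => if eqd b a then g b else 0) l = g a.
Proof.
  induction l; intros Hn Hi; [contradiction|]. inversion Hn; subst.
  change ((if eqd a0 a then g a0 else 0) + sumR (fun b => if eqd b a then g b else 0) l = g a).
  destruct Hi as [->|Hi].
  - destruct (eqd a a); [|congruence].
    rewrite (sumR_ext _ (fun _ => 0)), sumR_zero; [lra|].
    intros x Hx. destruct (eqd x a); auto. subst; contradiction.
  - destruct (eqd a0 a). { subst; contradiction. } rewrite IHl; auto. lra.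
Qed.

Lemma valid_app M s t : valid M (s ++ t) <-> valid M s /\ valid M t.
Proof. unfold valid. apply Forall_app. Qed.

Lemma valid_snoc M s a : valid M s -> (a < M)%nat -> valid M (s ++ [a]).
Proof. intros Hs Ha. apply valid_app; split; auto. constructor; auto. Qed.

Lemma valid_cons M a s : valid M (a :: s) <-> (a < M)%nat /\ valid M s.
Proof. split; intros H. { inversion H; auto. } destruct H; constructor; auto. Qed.

Lemma valid_firstn M k s : valid M s -> valid M (firstn k s).
Proof. intros H. rewrite <- (firstn_skipn k s) in H. apply valid_app in H; tauto. Qed.

Lemma In_words M n w : In w (words M n) <-> length w = n /\ valid M w.
Proof.
  revert w; induction n; intros w; simpl.
  - split. { intros [<-|[]]; split; auto; constructor. }
    intros [H _]; destruct w; simpl in H; auto; discriminate.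
  - rewrite in_flat_map. split.
    + intros [w' [Hw' Hm]]. apply in_map_iff in Hm as [a [<- Ha]].
      apply IHn in Hw' as [Hl Hv]. apply in_seq in Ha.
      rewrite length_app; simpl. split; [lia|]. apply valid_snoc; auto; lia.
    + intros [Hl Hv]. destruct (exists_last (l:=w)) as [w' [a ->]].
      { intros ->; simpl in Hl; discriminate. }
      rewrite length_app in Hl; simpl in Hl. apply valid_app in Hv as [Hv1 Hv2].
      exists w'. split. { apply IHn; split; auto; lia. }
      apply in_map_iff. exists a; split; auto. apply in_seq. inversion Hv2; lia.
Qed.

Lemma words_S M k (g : list nat -> R) :
  sumR g (words M (S k)) = sumR (fun w => sumR (fun a => g (w ++ [a])) (seq 0 M)) (words M k).
Proof. simpl. rewrite sumR_flat_map. apply sumR_ext; intros. apply sumR_map. Qed.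

Lemma words_split M m k (g : list nat -> R) :
  sumR g (words M (m + k)) = sumR (fun t => sumR (fun u => g (t ++ u)) (words M k)) (words M m).
Proof.
  revert g; induction k; intros g.
  - rewrite Nat.add_0_r. apply sumR_ext; intros. unfold sumR; simpl. rewrite app_nil_r; lra.
  - rewrite Nat.add_succ_r, words_S, IHk. apply sumR_ext; intros t _.
    rewrite words_S. apply sumR_ext; intros u _. apply sumR_ext; intros a _.
    rewrite app_assoc; auto.
Qed.

Lemma words_front M k (g : list nat -> R) :
  sumR g (words M (S k)) = sumR (fun x => sumR (fun u => g (x :: u)) (words M k)) (seq 0 M).
Proof.
  change (S k) with (1 + k)%nat. rewrite words_split. simpl words.
  rewrite app_nil_r, sumR_map. reflexivity.
Qed.

Lemma words_delta M n s (g : list nat -> R) :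
  length s = n -> valid M s ->
  sumR (fun y => if list_eq_dec Nat.eq_dec y s then g y else 0) (words M n) = g s.
Proof.
  revert s g; induction n; intros s g Hl Hv.
  - destruct s; [|simpl in Hl; discriminate]. unfold sumR; simpl. lra.
  - destruct (exists_last (l:=s)) as [s' [a ->]]. { intros ->; simpl in Hl; discriminate. }
    rewrite length_app in Hl; simpl in Hl. apply valid_app in Hv as [Hv1 Hv2].
    rewrite words_S.
    rewrite (sumR_ext _ (fun w => if list_eq_dec Nat.eq_dec w s' then g (s' ++ [a]) else 0)).
    { apply (IHn s' (fun _ => g (s' ++ [a]))); auto; lia. }
    intros w _. destruct (list_eq_dec Nat.eq_dec w s') as [->|Hne].
    + rewrite (sumR_ext _ (fun b => if Nat.eq_dec b a then g (s' ++ [b]) else 0)).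
      { apply (sumR_delta Nat.eq_dec (fun b => g (s' ++ [b]))); [apply seq_NoDup|].
        apply in_seq. inversion Hv2; lia. }
      intros b _. destruct (list_eq_dec Nat.eq_dec (s' ++ [b]) (s' ++ [a])) as [E|E],
        (Nat.eq_dec b a); subst; auto.
      * apply app_inj_tail in E as [_ ?]; congruence.
      * congruence.
    + rewrite (sumR_ext _ (fun _ => 0)); [apply sumR_zero|]. intros b _.
      destruct (list_eq_dec Nat.eq_dec (w ++ [b]) (s' ++ [a])) as [E|]; auto.
      apply app_inj_tail in E as [? _]; congruence.
Qed.

Lemma words_two_terms M n (f : list nat -> R) y1 y2 :
  In y1 (words M n) -> In y2 (words M n) -> y1 <> y2 ->
  (forall y, In y (words M n) -> 0 <= f y) -> f y1 + f y2 <= sumR f (words M n).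
Proof.
  intros H1 H2 Hne Hf. apply In_words in H1 as [L1 V1]. apply In_words in H2 as [L2 V2].
  rewrite <- (words_delta M n y1 f L1 V1), <- (words_delta M n y2 f L2 V2), <- sumR_plus.
  apply sumR_le; intros y Hy. pose proof (Hf y Hy).
  destruct (list_eq_dec Nat.eq_dec y y1), (list_eq_dec Nat.eq_dec y y2); subst; try congruence; lra.
Qed.

Section Process.
Variable M : nat.
Variable P : list nat -> R.
Hypothesis HP : is_process M P.

Lemma P_nonneg s : valid M s -> 0 <= P s.
Proof. destruct HP as [_ [H _]]. auto. Qed.

Lemma P_children s : valid M s -> sumR (fun a => P (s ++ [a])) (seq 0 M) = P s.
Proof. destruct HP as [_ [_ H]]. auto. Qed.

Lemma P_extensions s k : valid M s -> sumR (fun t => P (s ++ t)) (words M k) = P s.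
Proof.
  revert s; induction k; intros s Hs.
  - unfold sumR; simpl. rewrite app_nil_r; lra.
  - rewrite words_S, <- (IHk s Hs). apply sumR_ext; intros w Hw.
    apply In_words in Hw as [_ Hw]. rewrite <- P_children by (apply valid_app; auto).
    apply sumR_ext; intros. rewrite app_assoc; auto.
Qed.

Lemma P_total k : sumR P (words M k) = 1.
Proof.
  destruct HP as [H0 _]. rewrite <- H0, <- (P_extensions [] k) by constructor.
  apply sumR_ext; auto.
Qed.

Lemma P_prefix_le s t : valid M (s ++ t) -> P (s ++ t) <= P s.
Proof.
  intros Hv. apply valid_app in Hv as [Hs Ht]. rewrite <- (P_extensions s (length t) Hs).
  apply (sumR_ge_term (fun t => P (s ++ t))). { apply In_words; auto. }
  intros y Hy. apply P_nonneg, valid_app; split; auto. apply In_words in Hy; tauto.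
Qed.

Lemma P_le1 s : valid M s -> P s <= 1.
Proof. intros. destruct HP as [H0 _]. rewrite <- H0. apply (P_prefix_le [] s); auto. Qed.

End Process.

Ltac destruct_Rle := repeat match goal with
  | |- context [Rle_dec ?x ?y] => destruct (Rle_dec x y)
  | H : context [Rle_dec ?x ?y] |- _ => destruct (Rle_dec x y) end.

(** ** Overlaps of intervals *)

Definition overlap (a b c d : R) : R := Rmax 0 (Rmin b d - Rmax a c).

Definition near_overlap (e p a b : R) : R := overlap a b (Rmax 0 (p - e)) (Rmin 1 (p + e)).

Definition clamp (a b x : R) : R := Rmin b (Rmax a x).

Lemma overlap_clamp a b c d : a <= b -> c <= d -> overlap a b c d = clamp a b d - clamp a b c.
Proof. intros. unfold overlap, clamp, Rmax, Rmin. destruct_Rle; lra. Qed.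

Lemma overlap_nonneg a b c d : 0 <= overlap a b c d.
Proof. apply Rmax_l. Qed.

Lemma overlap_le a b c d : a <= b -> overlap a b c d <= b - a.
Proof. intros. unfold overlap, Rmax, Rmin. destruct_Rle; lra. Qed.

Lemma overlap_sym a b c d : overlap a b c d = overlap c d a b.
Proof. unfold overlap, Rmax, Rmin. destruct_Rle; lra. Qed.

Lemma overlap_inside a b c d : a <= b -> c <= a -> b <= d -> overlap a b c d = b - a.
Proof. intros. unfold overlap, Rmax, Rmin. destruct_Rle; lra. Qed.

Lemma near_overlap_nonneg e p a b : 0 <= near_overlap e p a b.
Proof. apply overlap_nonneg. Qed.

(** The geometric heart of the interval algorithm: an interval [[a,b)] of
    length [<= e] meeting [[c,d)] without being inside it contains [c] or [d],
    so the overlap is covered by the [e]-neighbourhoods of [c] and [d]. *)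
Lemma overlap_straddle a b c d e :
  0 <= a <= b -> b <= 1 -> b - a <= e -> c <= d -> ~ (c <= a /\ b <= d) ->
  overlap a b c d <= near_overlap e c a b + near_overlap e d a b.
Proof.
  intros Ha Hb He Hcd Hnot.
  pose proof (near_overlap_nonneg e c a b). pose proof (near_overlap_nonneg e d a b).
  assert (Hov : overlap a b c d = 0 \/ a < c < b \/ a < d < b)
    by (unfold overlap, Rmax, Rmin; destruct_Rle; lra).
  pose proof (overlap_le a b c d ltac:(lra)).
  unfold near_overlap in *. destruct Hov as [Z|[Hc|Hd]]; [lra| |].
  - rewrite (overlap_inside a b (Rmax 0 (c - e))); [lra|lra| |];
      unfold Rmax, Rmin; destruct_Rle; lra.
  - rewrite (overlap_inside a b (Rmax 0 (d - e)) (Rmin 1 (d + e))); [lra|lra| |];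
      unfold Rmax, Rmin; destruct_Rle; lra.
Qed.

(** ** Closed form of the intervals of the interval algorithm

   The interval of a valid word [s] is [[left_end s, left_end s + P s)], where
   [left_end s] is the probability of the words of length [|s|] preceding [s]
   lexicographically.  Hence, for every length, these intervals tile [[0,1)]. *)

Section Intervals.
Variable M : nat.
Variable P : list nat -> R.
Hypothesis HP : is_process M P.

Definition mass_below (pre : list nat) (x : nat) : R :=
  sumR (fun k => P (pre ++ [k])) (seq 0 x).

(** Offset of the cylinder [pre ++ rest] inside the cylinder [pre]. *)
Fixpoint offset (pre rest : list nat) : R :=
  match rest with
  | [] => 0
  | x :: r => mass_below pre x + offset (pre ++ [x]) r
  end.

Definition left_end (s : list nat) : R := offset [] s.

Lemma mass_below_S pre x : mass_below pre (S x) = mass_below pre x + P (pre ++ [x]).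
Proof. apply sumR_seq_S. Qed.

Lemma mass_below_nonneg pre x : valid M pre -> (x <= M)%nat -> 0 <= mass_below pre x.
Proof.
  intros. apply sumR_nonneg; intros k Hk. apply in_seq in Hk.
  apply (P_nonneg M P HP), valid_snoc; auto; lia.
Qed.

Lemma mass_below_le pre x : valid M pre -> (x <= M)%nat -> mass_below pre x <= P pre.
Proof.
  intros Hv Hx. rewrite <- (P_children M P HP pre Hv). unfold mass_below.
  replace M with (x + (M - x))%nat by lia. rewrite seq_app, sumR_app.
  assert (0 <= sumR (fun a => P (pre ++ [a])) (seq (0 + x) (M - x))); [|lra].
  apply sumR_nonneg; intros k Hk. apply in_seq in Hk.
  apply (P_nonneg M P HP), valid_snoc; auto; lia.
Qed.

Lemma cumcond_scaled pre lo hi x : valid M pre -> (x <= M)%nat -> hi - lo = P pre ->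
  (hi - lo) * cumcond P pre x = mass_below pre x.
Proof.
  intros Hv Hx Hd. unfold cumcond, mass_below. rewrite Hd.
  destruct (Req_dec (P pre) 0) as [H0|H0].
  - rewrite H0, Rmult_0_l, (sumR_ext _ (fun _ => 0)), sumR_zero; auto.
    intros k Hk. apply in_seq in Hk.
    assert (Hk' : valid M (pre ++ [k])) by (apply valid_snoc; auto; lia).
    pose proof (P_prefix_le M P HP pre [k] Hk'). pose proof (P_nonneg M P HP _ Hk'). lra.
  - rewrite <- sumR_scal. apply sumR_ext; intros. field; auto.
Qed.

Lemma ivl_closed pre lo hi t : valid M pre -> valid M t -> hi - lo = P pre ->
  ivl P pre lo hi t = (lo + offset pre t, lo + offset pre t + P (pre ++ t)).
Proof.
  revert pre lo hi; induction t as [|x r IH]; intros pre lo hi Hv Ht Hd; simpl.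
  { rewrite app_nil_r. f_equal; lra. }
  apply valid_cons in Ht as [Hx Hr].
  rewrite (cumcond_scaled pre lo hi x), (cumcond_scaled pre lo hi (S x)); auto; try lia.
  rewrite IH; auto.
  - rewrite <- app_assoc. simpl. f_equal; lra.
  - apply valid_snoc; auto.
  - rewrite mass_below_S; lra.
Qed.

Lemma interval_closed s : valid M s -> interval P s = (left_end s, left_end s + P s).
Proof.
  intros Hs. unfold interval. destruct HP as [H0 _].
  rewrite ivl_closed; auto; [|constructor|rewrite H0; lra].
  unfold left_end. simpl. f_equal; lra.
Qed.

Lemma offset_nonneg pre t : valid M pre -> valid M t -> 0 <= offset pre t.
Proof.
  revert pre; induction t as [|x r IH]; intros pre Hv Ht; simpl; [lra|].
  apply valid_cons in Ht as [Hx Hr].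
  pose proof (mass_below_nonneg pre x Hv ltac:(lia)).
  pose proof (IH (pre ++ [x]) (valid_snoc M pre x Hv Hx) Hr). lra.
Qed.

Lemma offset_bound pre t : valid M pre -> valid M t -> offset pre t + P (pre ++ t) <= P pre.
Proof.
  revert pre; induction t as [|x r IH]; intros pre Hv Ht; simpl; [rewrite app_nil_r; lra|].
  apply valid_cons in Ht as [Hx Hr].
  specialize (IH _ (valid_snoc M pre x Hv Hx) Hr). rewrite <- app_assoc in IH. simpl in IH.
  pose proof (mass_below_le pre (S x) Hv Hx). rewrite mass_below_S in H. lra.
Qed.

Lemma offset_app pre s t : offset pre (s ++ t) = offset pre s + offset (pre ++ s) t.
Proof.
  revert pre; induction s as [|x s IH]; intros pre; simpl; [rewrite app_nil_r; lra|].
  rewrite IH, <- app_assoc. simpl. lra.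
Qed.

Lemma left_end_range s : valid M s -> 0 <= left_end s /\ left_end s + P s <= 1.
Proof.
  intros Hs. destruct HP as [H0 _]. split; [apply offset_nonneg; auto; constructor|].
  rewrite <- H0. apply (offset_bound [] s); auto; constructor.
Qed.

Lemma left_end_nest s t : valid M (s ++ t) ->
  left_end s <= left_end (s ++ t) /\ left_end (s ++ t) + P (s ++ t) <= left_end s + P s.
Proof.
  intros Hv. apply valid_app in Hv as [Hs Ht]. unfold left_end. rewrite offset_app. simpl.
  pose proof (offset_nonneg s t Hs Ht). pose proof (offset_bound s t Hs Ht). lra.
Qed.

Lemma overlap_partition_gen a b k : a <= b -> forall pre lo, valid M pre ->
  sumR (fun t => overlap a b (lo + offset pre t) (lo + offset pre t + P (pre ++ t))) (words M k)
  = clamp a b (lo + P pre) - clamp a b lo.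
Proof.
  intros Hab. induction k; intros pre lo Hv.
  - unfold sumR; simpl. rewrite app_nil_r, !Rplus_0_r, overlap_clamp; auto.
    pose proof (P_nonneg M P HP pre Hv). lra.
  - rewrite words_front, (sumR_ext _ (fun x => clamp a b (lo + mass_below pre (S x))
                                            - clamp a b (lo + mass_below pre x))).
    { rewrite (sumR_telescope (fun x => clamp a b (lo + mass_below pre x))).
      unfold mass_below at 1. rewrite (P_children M P HP pre Hv). simpl. unfold sumR; simpl.
      rewrite Rplus_0_r; auto. }
    intros x Hx. apply in_seq in Hx.
    rewrite mass_below_S, <- (Rplus_assoc lo),
      <- (IHk (pre ++ [x]) (lo + mass_below pre x) (valid_snoc M pre x Hv ltac:(lia))).
    apply sumR_ext; intros u _. simpl. rewrite <- app_assoc. simpl. f_equal; lra.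
Qed.

Lemma overlap_partition a b k : 0 <= a <= b -> b <= 1 ->
  sumR (fun t => overlap a b (left_end t) (left_end t + P t)) (words M k) = b - a.
Proof.
  intros Hab Hb1. pose proof (overlap_partition_gen a b k ltac:(lra) [] 0 ltac:(constructor)) as H1.
  destruct HP as [H0 _]. rewrite H0 in H1.
  rewrite (sumR_ext _ (fun t => overlap a b (0 + offset [] t) (0 + offset [] t + P ([] ++ t)))).
  - rewrite H1. unfold clamp, Rmax, Rmin. destruct_Rle; lra.
  - intros. unfold left_end. simpl. f_equal; lra.
Qed.

Lemma overlap_partition_sym c d k : 0 <= c <= d -> d <= 1 ->
  sumR (fun s => overlap (left_end s) (left_end s + P s) c d) (words M k) = d - c.
Proof.
  intros. rewrite <- (overlap_partition c d k) by auto. apply sumR_ext; intros; apply overlap_sym.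
Qed.

Lemma near_overlap_sum e p k : 0 <= p <= 1 -> 0 < e ->
  sumR (fun s => near_overlap e p (left_end s) (left_end s + P s)) (words M k) <= 2 * e.
Proof.
  intros Hp He. unfold near_overlap. rewrite overlap_partition_sym;
    unfold Rmax, Rmin; destruct_Rle; lra.
Qed.

End Intervals.

(** ** Distribution of the stopping time

   [first_output phi s] is the output of the shortest prefix of [s] on which
   [phi] stops (if any).  The leaves of length [<= m] are exactly the prefixes
   of the words of length [m] at which [phi] stops first, so the
   leaf masses up to [m] are sums over [X^m] of functions of [first_output]. *)

Fixpoint first_output (phi : algo) (s : list nat) : option (list nat) :=
  match s with
  | [] => phi []
  | x :: r => match phi [] with
              | Some z => Some z
              | None => first_output (fun t => phi (x :: t)) r
              end
  end.

Lemma first_output_snoc phi s a : first_output phi (s ++ [a]) =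
  match first_output phi s with Some z => Some z | None => phi (s ++ [a]) end.
Proof. revert phi; induction s as [|x r IH]; intros phi; simpl; destruct (phi []); auto. Qed.

Lemma first_output_some phi s z : phi s = Some z -> is_some (first_output phi s) = true.
Proof.
  revert phi; induction s as [|x r IH]; intros phi H; simpl; [rewrite H; auto|].
  destruct (phi []); auto.
Qed.

Lemma first_output_prefix phi s z : first_output phi s = Some z ->
  exists k, (k <= length s)%nat /\ phi (firstn k s) = Some z.
Proof.
  revert phi; induction s as [|x r IH]; intros phi H; simpl in H.
  - exists 0%nat; auto.
  - destruct (phi []) eqn:E.
    + inversion H; subst. exists 0%nat; simpl; split; auto; lia.
    + apply IH in H as [k [Hk Hz]]. exists (S k); simpl; split; auto; lia.
Qed.

Lemma first_output_none phi s :
  forallb (fun k => is_none (phi (firstn k s))) (seq 0 (S (length s)))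
  = is_none (first_output phi s).
Proof.
  revert phi; induction s as [|x r IH]; intros phi; [apply andb_true_r|].
  change (seq 0 (S (length (x :: r)))) with (0%nat :: seq 1 (S (length r))).
  assert (Hmap : forall (f : nat -> bool) l, forallb f (map S l) = forallb (fun k => f (S k)) l)
    by (induction l; simpl; congruence).
  rewrite <- seq_shift. cbn [forallb]. rewrite Hmap. cbn [firstn].
  rewrite (IH (fun t => phi (x :: t))).
  simpl. destruct (phi []); auto.
Qed.

Lemma leafb_snoc phi s a :
  leafb phi (s ++ [a]) = is_some (phi (s ++ [a])) && is_none (first_output phi s).
Proof.
  unfold leafb. f_equal. rewrite length_app, Nat.add_1_r, <- first_output_none.
  assert (Hpre : forall k, In k (seq 0 (S (length s))) -> firstn k (s ++ [a]) = firstn k s).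
  { intros k Hk. apply in_seq in Hk. rewrite firstn_app.
    replace (k - length s)%nat with 0%nat by lia. apply app_nil_r. }
  induction (seq 0 (S (length s))) as [|k l IHl]; simpl; auto.
  rewrite Hpre, IHl; simpl; auto. intros; apply Hpre; simpl; auto.
Qed.

Section Leaves.
Variable MX : nat.
Variable PX : list nat -> R.
Hypothesis HPX : is_process MX PX.
Variable phi : algo.
Variable F : option (list nat) -> R.
Hypothesis F_None : F None = 0.

Lemma leaf_decomposition n :
  sumR (fun j => sumR (fun s => if leafb phi s then F (phi s) * PX s else 0) (words MX j))
       (seq 0 (S n))
  = sumR (fun s => F (first_output phi s) * PX s) (words MX n).
Proof.
  induction n.
  - unfold sumR; simpl. unfold leafb; simpl. destruct (phi []); simpl; try rewrite F_None; lra.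
  - rewrite sumR_seq_S, IHn, !words_S, <- sumR_plus. apply sumR_ext; intros s Hs.
    apply In_words in Hs as [_ Hs].
    destruct (first_output phi s) as [z|] eqn:E.
    + rewrite (sumR_ext _ (fun _ => 0)), sumR_zero, Rplus_0_r,
        (sumR_ext _ (fun a => F (Some z) * PX (s ++ [a]))), sumR_scal, (P_children MX PX HPX); auto.
      * intros a _. rewrite first_output_snoc, E. auto.
      * intros a _. rewrite leafb_snoc, E. simpl. rewrite andb_false_r. auto.
    + rewrite F_None, Rmult_0_l, Rplus_0_l. apply sumR_ext; intros a _.
      rewrite leafb_snoc, first_output_snoc, E. simpl.
      destruct (phi (s ++ [a])); simpl; auto. rewrite F_None; lra.
Qed.
End Leaves.

Definition stopped (o : option (list nat)) : R := if is_some o then 1 else 0.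
Definition outputs (y : list nat) (o : option (list nat)) : R :=
  match o with Some y' => if list_eq_dec Nat.eq_dec y' y then 1 else 0 | None => 0 end.

Lemma outputs_nonneg y o : 0 <= outputs y o.
Proof. unfold outputs. destruct o; [|lra]. destruct (list_eq_dec _ _ _); lra. Qed.

Lemma leaf_mass_sum MX PX phi n : is_process MX PX ->
  sumR (leaf_mass MX PX phi) (seq 0 (S n))
  = sumR (fun s => stopped (first_output phi s) * PX s) (words MX n).
Proof.
  intros HP. rewrite <- (leaf_decomposition MX PX HP phi stopped eq_refl n).
  apply sumR_ext; intros j _. apply sumR_ext; intros s _. destruct (leafb phi s) eqn:E; auto.
  apply andb_prop in E as [E _]. unfold stopped. rewrite E. lra.
Qed.

Lemma leaf_mass_to_sum MX PX phi y n : is_process MX PX ->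
  sum_f_R0 (leaf_mass_to MX PX phi y) n
  = sumR (fun s => outputs y (first_output phi s) * PX s) (words MX n).
Proof.
  intros HP. rewrite <- (leaf_decomposition MX PX HP phi (outputs y) eq_refl n).
  replace (sum_f_R0 (leaf_mass_to MX PX phi y) n)
    with (sumR (leaf_mass_to MX PX phi y) (seq 0 (S n))).
  - apply sumR_ext; intros j _. apply sumR_ext; intros s _. destruct (leafb phi s); auto.
    unfold outputs. destruct (phi s) as [y'|]; [|lra]. destruct (list_eq_dec _ y' y); lra.
  - induction n; [unfold sumR; simpl; lra|]. rewrite sumR_seq_S, IHn. reflexivity.
Qed.

(** ** Stopping within a real time budget

   [T <= t] means [T <= budget t], the largest integer [<= t] (for [t >= 0]);
   so [Pr(T > t)] is one minus the stopped mass over [X^(budget t)]. *)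

Lemma up_lt_INR (t : R) j : (j < Z.to_nat (up t))%nat -> INR j <= t.
Proof.
  intros Hj. destruct (archimed t) as [H1 H2].
  assert (Z.of_nat j + 1 <= up t)%Z by lia.
  apply IZR_le in H. rewrite plus_IZR in H. rewrite INR_IZR_INZ. simpl in H. lra.
Qed.

Lemma INR_up_gt (t : R) : t < INR (Z.to_nat (up t)).
Proof.
  destruct (archimed t) as [H1 H2]. destruct (Z_le_gt_dec 0 (up t)).
  - rewrite INR_IZR_INZ, Z2Nat.id; auto; lra.
  - replace (Z.to_nat (up t)) with 0%nat by lia. simpl. apply Z.gt_lt, IZR_lt in g. lra.
Qed.

Lemma INR_up_le t : 0 <= t -> INR (Z.to_nat (up t)) <= t + 1.
Proof.
  intros. destruct (archimed t) as [H1 H2].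
  assert (0 < up t)%Z by (apply lt_IZR; lra). rewrite INR_IZR_INZ, Z2Nat.id by lia. lra.
Qed.

Definition budget (t : R) : nat := pred (Z.to_nat (up t)).

Lemma budget_S t : 0 <= t -> S (budget t) = Z.to_nat (up t).
Proof.
  intros. unfold budget. destruct (archimed t) as [H1 H2].
  assert (0 < up t)%Z by (apply lt_IZR; lra). lia.
Qed.

Lemma budget_range t : 0 <= t -> t - 1 < INR (budget t) <= t.
Proof.
  intros Ht. split.
  - pose proof (INR_up_gt t). rewrite <- budget_S, S_INR in H by auto. lra.
  - apply up_lt_INR. rewrite <- budget_S; auto.
Qed.

Lemma budget_grows r : 0 < r -> forall K, exists N, forall n, (n >= N)%nat -> (budget (INR n * r) >= K)%nat.
Proof.
  intros Hr K. exists (Z.to_nat (up ((INR K + 1) / r))). intros n Hn.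
  pose proof (INR_up_gt ((INR K + 1) / r)). apply le_INR in Hn.
  assert (Hnr : INR n * r > INR K + 1).
  { assert (INR n > (INR K + 1) / r) by lra.
    apply (Rmult_gt_compat_r r) in H0; auto. unfold Rdiv in H0. rewrite Rmult_assoc, Rinv_l in H0; lra. }
  pose proof (pos_INR K). pose proof (budget_range (INR n * r) ltac:(lra)).
  assert (INR K < INR (budget (INR n * r))) by lra. apply INR_lt in H2. lia.
Qed.

Lemma prob_stop_gt_sum MX PX phi t : is_process MX PX -> 0 <= t ->
  prob_stop_gt MX PX phi t
  = 1 - sumR (fun s => stopped (first_output phi s) * PX s) (words MX (budget t)).
Proof.
  intros HP Ht. unfold prob_stop_gt, prob_stop_le. rewrite <- leaf_mass_sum, budget_S by auto.
  f_equal. rewrite sumR_seq_S.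
  destruct (Rle_dec (INR (Z.to_nat (up t))) t). { pose proof (INR_up_gt t); lra. }
  rewrite Rplus_0_r. apply sumR_ext; intros j Hj. apply in_seq in Hj.
  destruct (Rle_dec (INR j) t); auto. exfalso; apply n0, up_lt_INR; lia.
Qed.

Lemma stopped_mass_le1 MX PX phi m : is_process MX PX ->
  sumR (fun s => stopped (first_output phi s) * PX s) (words MX m) <= 1.
Proof.
  intros HP. rewrite <- (P_total MX PX HP m). apply sumR_le; intros s Hs.
  apply In_words in Hs as [_ Hs]. pose proof (P_nonneg MX PX HP s Hs).
  unfold stopped. destruct (is_some _); lra.
Qed.

Lemma prob_stop_gt_nonneg MX PX phi t : is_process MX PX -> 0 <= t -> 0 <= prob_stop_gt MX PX phi t.
Proof.
  intros HP Ht. rewrite prob_stop_gt_sum by auto. pose proof (stopped_mass_le1 MX PX phi (budget t) HP). lra.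
Qed.

(** A negative rate is never achievable: the algorithm cannot stop before time 0. *)
Lemma achievable_nonneg MX PX MY PY r : achievable MX PX MY PY r -> 0 <= r.
Proof.
  intros [phi [_ Hc]]. destruct (Rle_dec 0 r); auto. exfalso.
  destruct (Hc (1/2)) as [N HN]; [lra|]. specialize (HN (S N) ltac:(lia)).
  unfold prob_stop_gt, prob_stop_le in HN.
  assert (INR (S N) * r < 0) by (pose proof (lt_0_INR (S N) ltac:(lia)); nra).
  destruct (archimed (INR (S N) * r)) as [H1 H2].
  assert (up (INR (S N) * r) < 1)%Z by (apply lt_IZR; lra).
  replace (Z.to_nat (up (INR (S N) * r))) with 0%nat in HN by lia.
  unfold R_dist, sumR in HN. cbn [seq fold_right] in HN.
  destruct (Rle_dec (INR 0) (INR (S N) * r)) as [Hle|]; [change (INR 0) with 0 in Hle; lra|].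
  replace (1 - (0 + 0) - 0) with 1 in HN by ring. rewrite Rabs_R1 in HN. lra.
Qed.

(** ** Spectral entropies as thresholds of tail probabilities *)

(** [thresh n k = 2^(-n k)]: [info P n w >= k] iff [P w <= thresh n k]. *)
Definition thresh (n : nat) (k : R) : R := exp (- (INR n * k * ln 2)).

Lemma ln2_pos : 0 < ln 2.
Proof. pose proof ln_lt_2. lra. Qed.

Lemma exp_le_iff x y : exp x <= exp y <-> x <= y.
Proof.
  split; intros H.
  - destruct (Rle_dec x y); auto. assert (y < x) by lra. apply exp_increasing in H0. lra.
  - destruct H as [H| ->]; [left; apply exp_increasing; auto|lra].
Qed.

Lemma thresh_pos n k : 0 < thresh n k.
Proof. apply exp_pos. Qed.

Lemma thresh_le m n k l : INR m * k <= INR n * l -> thresh n l <= thresh m k.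
Proof. intros. unfold thresh. apply exp_le_iff. pose proof ln2_pos. nra. Qed.

Lemma thresh_lt1 n l : (1 <= n)%nat -> 0 < l -> thresh n l < 1.
Proof.
  intros. unfold thresh. rewrite <- exp_0. apply exp_increasing.
  pose proof (le_INR 1 n H). pose proof ln2_pos.
  assert (0 < INR n * l * ln 2) by (apply Rmult_lt_0_compat; simpl in *; nra). lra.
Qed.

Lemma exp_small eps : 0 < eps -> exists Y, forall y, Y <= y -> exp (- y) < eps.
Proof.
  intros He. exists (/ eps). intros y Hy.
  pose proof (Rinv_0_lt_compat eps He). pose proof (exp_ineq1_le y). pose proof (exp_pos y).
  rewrite exp_Ropp. apply (Rmult_lt_reg_r (exp y)); auto. rewrite Rinv_l by lra.
  assert (eps * y >= 1).
  { apply Rle_ge, (Rmult_le_reg_l (/ eps)); auto. rewrite <- Rmult_assoc, Rinv_l by lra. lra. }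
  nra.
Qed.

Lemma thresh_cv k : 0 < k -> Un_cv (fun m => thresh m k) 0.
Proof.
  intros Hk eps He. destruct (exp_small eps He) as [Y HY]. pose proof ln2_pos.
  exists (Z.to_nat (up (Rmax 0 Y / (k * ln 2)))). intros m Hm.
  pose proof (INR_up_gt (Rmax 0 Y / (k * ln 2))). apply le_INR in Hm.
  assert (Hkl : 0 < k * ln 2) by (apply Rmult_lt_0_compat; auto).
  assert (Y <= INR m * k * ln 2).
  { assert (Rmax 0 Y / (k * ln 2) < INR m) by lra.
    apply (Rmult_lt_compat_r (k * ln 2)) in H1; auto. unfold Rdiv in H1.
    rewrite Rmult_assoc, Rinv_l in H1 by lra. pose proof (Rmax_r 0 Y). nra. }
  unfold R_dist, thresh. rewrite Rminus_0_r, Rabs_right; [apply HY; auto|left; apply exp_pos].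
Qed.

Lemma info_ge_iff P n w k : (1 <= n)%nat -> 0 < P w -> (k <= info P n w <-> P w <= thresh n k).
Proof.
  intros Hn Hp. unfold info, log2, thresh. rewrite ln_Rinv by auto.
  rewrite <- (exp_ln (P w)) at 2 by auto. rewrite exp_le_iff.
  assert (HN : 0 < INR n) by (apply lt_0_INR; lia). pose proof ln2_pos.
  set (x := ln (P w)). set (N := INR n). set (L := ln 2).
  assert (Hq : / N * (- x / L) * (N * L) = - x) by (unfold L, N in *; field; lra).
  assert (HNL : 0 < N * L) by (apply Rmult_lt_0_compat; auto).
  split; intros H1.
  - assert (k * (N * L) <= / N * (- x / L) * (N * L)) by (apply Rmult_le_compat_r; lra). nra.
  - assert (H2 : k * (N * L) <= / N * (- x / L) * (N * L)) by nra.
    apply Rmult_le_reg_r in H2; auto.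
Qed.

Definition prob_le (M : nat) (P : list nat -> R) (n : nat) (c : R) : R :=
  sumR (fun w => if Rle_dec (P w) c then P w else 0) (words M n).
Definition prob_gt (M : nat) (P : list nat -> R) (n : nat) (c : R) : R :=
  sumR (fun w => if Rle_dec (P w) c then 0 else P w) (words M n).

Lemma Un_cv_squeeze (u v : nat -> R) N0 :
  (forall n, (n >= N0)%nat -> 0 <= u n <= v n) -> Un_cv v 0 -> Un_cv u 0.
Proof.
  intros H Hv eps Heps. destruct (Hv eps Heps) as [N HN]. exists (max N N0). intros n Hn.
  specialize (HN n ltac:(lia)). specialize (H n ltac:(lia)). unfold R_dist in *.
  rewrite Rminus_0_r in *. rewrite Rabs_right in * by lra. lra.
Qed.

Section Spectrum.
Variable M : nat.
Variable P : list nat -> R.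
Hypothesis HP : is_process M P.

Lemma prob_le_gt n c : prob_le M P n c + prob_gt M P n c = 1.
Proof.
  unfold prob_le, prob_gt. rewrite <- sumR_plus, <- (P_total M P HP n).
  apply sumR_ext; intros. destruct (Rle_dec (P x) c); lra.
Qed.

Lemma prob_le_nonneg n c : 0 <= prob_le M P n c.
Proof.
  apply sumR_nonneg; intros w Hw. apply In_words in Hw as [_ Hw].
  pose proof (P_nonneg M P HP w Hw). destruct (Rle_dec (P w) c); lra.
Qed.

Lemma prob_gt_nonneg n c : 0 <= prob_gt M P n c.
Proof.
  apply sumR_nonneg; intros w Hw. apply In_words in Hw as [_ Hw].
  pose proof (P_nonneg M P HP w Hw). destruct (Rle_dec (P w) c); lra.
Qed.

Lemma prob_le_mono n c c' : c <= c' -> prob_le M P n c <= prob_le M P n c'.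
Proof.
  intros Hc. apply sumR_le; intros w Hw. apply In_words in Hw as [_ Hw].
  pose proof (P_nonneg M P HP w Hw). destruct (Rle_dec (P w) c), (Rle_dec (P w) c'); lra.
Qed.

(** Extending words can only decrease their probability. *)
Lemma prob_gt_extend m k c c' : c <= c' -> prob_gt M P (m + k) c' <= prob_gt M P m c.
Proof.
  intros Hc. unfold prob_gt. rewrite words_split.
  apply sumR_le; intros t Ht. apply In_words in Ht as [_ Ht].
  destruct (Rle_dec (P t) c).
  - rewrite (sumR_ext _ (fun _ => 0)), sumR_zero; [lra|]. intros u Hu. apply In_words in Hu as [_ Hu].
    pose proof (P_prefix_le M P HP t u (proj2 (valid_app M t u) (conj Ht Hu))).
    destruct (Rle_dec (P (t ++ u)) c'); lra.
  - rewrite <- (P_extensions M P HP t k Ht). apply sumR_le; intros u Hu. apply In_words in Hu as [_ Hu].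
    pose proof (P_nonneg M P HP _ (proj2 (valid_app M t u) (conj Ht Hu))).
    destruct (Rle_dec (P (t ++ u)) c'); lra.
Qed.

Lemma spec_up_sum_le n lam : (1 <= n)%nat ->
  sumR (fun w => if Rle_dec lam (info P n w) then P w else 0) (words M n) <= prob_le M P n (thresh n lam).
Proof.
  intros Hn. apply sumR_le; intros w Hw. apply In_words in Hw as [_ Hw].
  pose proof (P_nonneg M P HP w Hw). destruct (Req_dec (P w) 0) as [E|E].
  - rewrite E. destruct (Rle_dec lam _), (Rle_dec 0 _); lra.
  - destruct (Rle_dec lam (info P n w)) as [Hi|], (Rle_dec (P w) (thresh n lam)); try lra.
    apply info_ge_iff in Hi; auto; lra.
Qed.

Lemma prob_le_le_spec_up_sum n lam lam' : (1 <= n)%nat -> lam' <= lam ->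
  prob_le M P n (thresh n lam) <= sumR (fun w => if Rle_dec lam' (info P n w) then P w else 0) (words M n).
Proof.
  intros Hn Hl. apply sumR_le; intros w Hw. apply In_words in Hw as [_ Hw].
  pose proof (P_nonneg M P HP w Hw). destruct (Req_dec (P w) 0) as [E|E].
  - rewrite E. destruct (Rle_dec lam' _), (Rle_dec 0 _); lra.
  - destruct (Rle_dec lam' (info P n w)), (Rle_dec (P w) (thresh n lam)) as [Ht|]; try lra.
    apply info_ge_iff in Ht; auto; lra.
Qed.

Lemma Hbar_above h lam : Hbar M P h -> lam > h -> Un_cv (fun n => prob_le M P n (thresh n lam)) 0.
Proof.
  intros [Hlb Hglb] Hl.
  assert (exists l', spec_up M P l' /\ l' < lam) as [l' [Hs Hl']].
  { apply NNPP; intros Hn. assert (lam <= h); [|lra]. apply Hglb. intros x Hx.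
    destruct (Rle_dec lam x); auto. exfalso; apply Hn; exists x; split; auto; lra. }
  refine (Un_cv_squeeze _ _ 1%nat _ Hs). intros n Hn.
  split; [apply prob_le_nonneg|apply prob_le_le_spec_up_sum; auto; lra].
Qed.

Lemma Hbar_below h lam : Hbar M P h -> lam < h -> ~ Un_cv (fun n => prob_le M P n (thresh n lam)) 0.
Proof.
  intros [Hlb _] Hl Hc. assert (h <= lam); [|lra]. apply Hlb.
  refine (Un_cv_squeeze _ _ 1%nat _ Hc). intros n Hn. split; [|apply spec_up_sum_le; auto].
  apply sumR_nonneg; intros w Hw. apply In_words in Hw as [_ Hw].
  pose proof (P_nonneg M P HP w Hw). destruct (Rle_dec _ _); lra.
Qed.

Lemma Hund_below l k : Hund M P l -> k < l -> Un_cv (fun n => prob_gt M P n (thresh n k)) 0.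
Proof.
  intros [Hub Hlub] Hl.
  assert (exists l', spec_low M P l' /\ k < l') as [l' [Hs Hl']].
  { apply NNPP; intros Hn. assert (l <= k); [|lra]. apply Hlub. intros x Hx.
    destruct (Rle_dec x k); auto. exfalso; apply Hn; exists x; split; auto; lra. }
  refine (Un_cv_squeeze _ _ 1%nat _ Hs). intros n Hn. split; [apply prob_gt_nonneg|].
  apply sumR_le; intros w Hw. apply In_words in Hw as [_ Hw].
  pose proof (P_nonneg M P HP w Hw). pose proof (thresh_pos n k).
  destruct (Rle_dec (P w) (thresh n k)), (Rle_dec (info P n w) l') as [|Hi]; try lra.
  exfalso. apply Hi. assert (~ (k <= info P n w)); [|lra].
  intros Hc. apply info_ge_iff in Hc; auto; lra.
Qed.

Lemma Hund_above l k : Hund M P l -> l < k -> ~ Un_cv (fun n => prob_gt M P n (thresh n k)) 0.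
Proof.
  intros [Hub _] Hl Hc. assert ((l + k) / 2 <= l); [|lra]. apply Hub.
  refine (Un_cv_squeeze _ _ 1%nat _ Hc). intros n Hn.
  split; [apply sumR_nonneg|apply sumR_le]; intros w Hw; apply In_words in Hw as [_ Hw];
    pose proof (P_nonneg M P HP w Hw); [destruct (Rle_dec _ _); lra|].
  destruct (Req_dec (P w) 0) as [E|E].
  - rewrite E. destruct (Rle_dec _ _), (Rle_dec 0 _); lra.
  - destruct (Rle_dec (P w) (thresh n k)) as [Ht|], (Rle_dec (info P n w) ((l + k) / 2)); try lra.
    apply info_ge_iff in Ht; auto; lra.
Qed.

Lemma Hbar_nonneg h : Hbar M P h -> 0 <= h.
Proof.
  intros [_ Hglb]. apply Hglb. intros x Hx. destruct (Rle_dec 0 x); auto. exfalso.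
  destruct (Hx (1/2)) as [N HN]; [lra|]. specialize (HN (S N) ltac:(lia)).
  rewrite (sumR_ext _ P), (P_total M P HP) in HN.
  { unfold R_dist in HN. rewrite Rminus_0_r, Rabs_R1 in HN. lra. }
  intros w Hw. apply In_words in Hw as [_ Hw]. pose proof (P_nonneg M P HP w Hw).
  destruct (Req_dec (P w) 0) as [E|E]; [rewrite E; destruct (Rle_dec _ _); auto|].
  destruct (Rle_dec x (info P (S N) w)) as [|Hi]; auto. exfalso. apply Hi.
  assert (0 <= info P (S N) w); [|lra].
  apply info_ge_iff; [lia|lra|]. unfold thresh. rewrite Rmult_0_r, Rmult_0_l, Ropp_0, exp_0.
  apply (P_le1 M P HP); auto.
Qed.

End Spectrum.

(** ** The converse: a lower bound on every achievable rate *)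

Lemma sum_f_R0_mono f n k : (forall j, 0 <= f j) -> (n <= k)%nat -> sum_f_R0 f n <= sum_f_R0 f k.
Proof. intros Hf Hk. induction Hk; [lra|]. simpl. specialize (Hf (S m)). lra. Qed.

Lemma partial_sum_le f l n : infinite_sum f l -> (forall j, 0 <= f j) -> sum_f_R0 f n <= l.
Proof.
  intros Hs Hf. destruct (Rle_dec (sum_f_R0 f n) l) as [|Hn]; auto.
  destruct (Hs (sum_f_R0 f n - l)) as [N HN]; [lra|].
  specialize (HN (max N n) ltac:(lia)). pose proof (sum_f_R0_mono f n (max N n) Hf ltac:(lia)).
  unfold Rdist in HN. rewrite Rabs_right in HN by lra. lra.
Qed.

Section Converse.
Variables (MX : nat) (PX : list nat -> R) (MY : nat) (PY : list nat -> R).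
Hypothesis HPX : is_process MX PX.
Hypothesis HPY : is_process MY PY.

Section OneAlgorithm.
Variable n : nat.
Variable phi : algo.
Hypothesis Hphi : gen_alg MX PX MY PY n phi.

Lemma first_output_valid s y : valid MX s -> first_output phi s = Some y -> length y = n /\ valid MY y.
Proof.
  intros Hs Hf. apply first_output_prefix in Hf as [k [_ Hk]].
  apply (proj1 Hphi (firstn k s)); auto. apply valid_firstn; auto.
Qed.

Lemma output_mass_le y m : length y = n -> valid MY y ->
  sumR (fun s => outputs y (first_output phi s) * PX s) (words MX m) <= PY y.
Proof.
  intros Hl Hv. rewrite <- leaf_mass_to_sum by auto. apply partial_sum_le; [apply Hphi; auto|].
  intros j. apply sumR_nonneg; intros s Hs. apply In_words in Hs as [_ Hs].
  pose proof (P_nonneg MX PX HPX s Hs). destruct (leafb phi s); [|lra].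
  destruct (phi s); [|lra]. destruct (list_eq_dec _ _ _); lra.
Qed.

Lemma output_prob_le s y : valid MX s -> first_output phi s = Some y -> PX s <= PY y.
Proof.
  intros Hs Hf. destruct (first_output_valid s y Hs Hf) as [Hl Hv].
  eapply Rle_trans; [|apply (output_mass_le y (length s)); auto].
  replace (PX s) with (outputs y (first_output phi s) * PX s).
  - apply (sumR_ge_term (fun s => outputs y (first_output phi s) * PX s)); [apply In_words; auto|].
    intros w Hw. apply In_words in Hw as [_ Hw]. pose proof (P_nonneg MX PX HPX w Hw).
    pose proof (outputs_nonneg y (first_output phi w)). nra.
  - rewrite Hf. unfold outputs. destruct (list_eq_dec _ y y); [lra|congruence].
Qed.

(** A stopped coin word [s] with output [y] has either [PX s <= d] or [PY y > d];
    the mass of the second kind is at most [Pr(P_Y(Y^n) > d)] by [output_mass_le]. *)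
Lemma key_inequality m d :
  sumR (fun s => stopped (first_output phi s) * PX s) (words MX m)
  <= prob_le MX PX m d + prob_gt MY PY n d.
Proof.
  set (big y := if Rle_dec (PY y) d then 0 else 1).
  assert (Hbig : prob_gt MY PY n d = sumR (fun y => big y * PY y) (words MY n))
    by (apply sumR_ext; intros; unfold big; destruct (Rle_dec _ _); lra).
  assert (Hout : sumR (fun y => big y * sumR (fun s => outputs y (first_output phi s) * PX s) (words MX m))
                   (words MY n) <= prob_gt MY PY n d).
  { rewrite Hbig. apply sumR_le; intros y Hy. apply In_words in Hy as [Hl Hv].
    apply Rmult_le_compat_l; [unfold big; destruct (Rle_dec _ _); lra|]. apply output_mass_le; auto. }
  eapply Rle_trans; [|apply Rplus_le_compat_l; exact Hout].
  rewrite (sumR_ext (fun y => big y * sumR (fun s => outputs y (first_output phi s) * PX s) (words MX m))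
    (fun y => sumR (fun s => big y * (outputs y (first_output phi s) * PX s)) (words MX m)))
    by (intros; rewrite sumR_scal; auto).
  rewrite <- sumR_swap. unfold prob_le. rewrite <- sumR_plus. apply sumR_le; intros s Hs.
  apply In_words in Hs as [_ Hs]. pose proof (P_nonneg MX PX HPX s Hs).
  destruct (first_output phi s) as [y|] eqn:E.
  - destruct (first_output_valid s y Hs E) as [Hl Hv].
    rewrite (sumR_ext _ (fun y' => if list_eq_dec Nat.eq_dec y' y then big y' * PX s else 0)).
    + rewrite (words_delta MY n y (fun y' => big y' * PX s)) by auto.
      pose proof (output_prob_le s y Hs E). unfold stopped, big; simpl.
      destruct (Rle_dec (PY y) d), (Rle_dec (PX s) d); lra.
    + intros y' _. unfold outputs.
      destruct (list_eq_dec Nat.eq_dec y y'), (list_eq_dec Nat.eq_dec y' y); subst; try congruence; lra.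
  - unfold stopped; simpl. rewrite (sumR_ext _ (fun _ => 0)), sumR_zero.
    + destruct (Rle_dec (PX s) d); lra.
    + intros; unfold outputs; lra.
Qed.

Lemma converse_le r d : 0 <= INR n * r ->
  prob_le MY PY n d <= prob_le MX PX (budget (INR n * r)) d + prob_stop_gt MX PX phi (INR n * r).
Proof.
  intros Hr. rewrite prob_stop_gt_sum by auto.
  pose proof (key_inequality (budget (INR n * r)) d). pose proof (prob_le_gt MY PY HPY n d). lra.
Qed.

Lemma converse_gt r d : 0 <= INR n * r ->
  prob_gt MX PX (budget (INR n * r)) d <= prob_gt MY PY n d + prob_stop_gt MX PX phi (INR n * r).
Proof.
  intros Hr. rewrite prob_stop_gt_sum by auto.
  pose proof (key_inequality (budget (INR n * r)) d).
  pose proof (prob_le_gt MX PX HPX (budget (INR n * r)) d). lra.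
Qed.

End OneAlgorithm.

Lemma Un_cv_const0 (u : nat -> R) N0 : (forall n, (n >= N0)%nat -> u n = 0) -> Un_cv u 0.
Proof.
  intros H eps He. exists N0. intros n Hn. rewrite H by auto.
  unfold R_dist. rewrite Rminus_0_r, Rabs_R0. lra.
Qed.

(** If [r hX < lam] with [hX = Hbar(X)], then [Pr(P_X(X^(n r)) <= 2^(-n lam))]
    vanishes: pass to a threshold [kap > hX] with [r kap <= lam]. *)
Lemma coin_prob_le_vanishes hX r lam : Hbar MX PX hX -> 0 <= r -> r * hX < lam ->
  Un_cv (fun n => prob_le MX PX (budget (INR n * r)) (thresh n lam)) 0.
Proof.
  intros HbX Hr Hlam. pose proof (Hbar_nonneg MX PX HPX hX HbX).
  destruct (Req_dec r 0) as [E|E].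
  - subst r. apply (Un_cv_const0 _ 1%nat). intros n Hn.
    assert (Hm : budget (INR n * 0) = 0%nat).
    { rewrite Rmult_0_r. pose proof (budget_range 0 (Rle_refl 0)).
      pose proof (pos_INR (budget 0)). apply INR_eq. simpl. lra. }
    rewrite Hm. unfold prob_le. simpl. unfold sumR; simpl. destruct HPX as [H0 _]. rewrite H0.
    pose proof (thresh_lt1 n lam Hn ltac:(lra)). destruct (Rle_dec 1 _); lra.
  - set (kap := hX + (lam - r * hX) / (2 * (r + 1))).
    assert (Hk1 : hX < kap)
      by (assert (0 < (lam - r * hX) / (2 * (r + 1))) by (apply Rdiv_lt_0_compat; lra); unfold kap; lra).
    assert (Hk2 : r * kap <= lam).
    { assert (r * ((lam - r * hX) / (2 * (r + 1))) <= lam - r * hX); [|unfold kap; nra].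
      unfold Rdiv. rewrite <- Rmult_assoc. apply (Rmult_le_reg_r (2 * (r + 1))); [lra|].
      rewrite Rmult_assoc, Rinv_l by lra. nra. }
    apply (Un_cv_squeeze _ (fun n => prob_le MX PX (budget (INR n * r)) (thresh (budget (INR n * r)) kap)) 0%nat).
    + intros n _. split; [apply prob_le_nonneg; auto|]. apply prob_le_mono; auto. apply thresh_le.
      pose proof (pos_INR n). pose proof (budget_range (INR n * r) ltac:(nra)).
      assert (INR (budget (INR n * r)) * kap <= INR n * r * kap) by (apply Rmult_le_compat_r; lra). nra.
    + intros eps He. destruct (Hbar_above MX PX HPX hX kap HbX Hk1 eps He) as [K HK].
      destruct (budget_grows r ltac:(lra) K) as [N HN]. exists N. intros n Hn. apply HK, HN; auto.
Qed.

(** If [Pr(P_X(X^(n r)) > 2^(-n lam))] vanishes and [r kap < lam], then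
    [Pr(P_X(X^m) > 2^(-m kap))] vanishes: every [m] lies above [budget (n r)]
    for [n = ceil (m kap / lam)], and longer words are less likely. *)
Lemma coin_prob_gt_reindex r lam kap : 0 <= r -> 0 < kap -> r * kap < lam ->
  Un_cv (fun n => prob_gt MX PX (budget (INR n * r)) (thresh n lam)) 0 ->
  Un_cv (fun m => prob_gt MX PX m (thresh m kap)) 0.
Proof.
  intros Hr Hkap Hrk Hcv eps Heps. destruct (Hcv eps Heps) as [N HN].
  assert (Hlam0 : 0 < lam) by nra.
  set (q := kap / lam).
  assert (Hq : q * lam = kap) by (unfold q; field; lra).
  assert (Hq0 : 0 < q) by (apply Rdiv_lt_0_compat; lra).
  assert (Hrq : r * q < 1) by (apply (Rmult_lt_reg_r lam); auto; rewrite Rmult_assoc, Hq; lra).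
  set (B := Rmax (INR N / q) (r / (1 - r * q))).
  exists (Z.to_nat (up B)). intros m Hm.
  assert (HmB : B < INR m) by (pose proof (INR_up_gt B); apply le_INR in Hm; lra).
  assert (HB1 : INR N <= B * q).
  { pose proof (Rmax_l (INR N / q) (r / (1 - r * q))) as H. fold B in H.
    apply (Rmult_le_compat_r q) in H; [|lra]. unfold Rdiv in H. rewrite Rmult_assoc, Rinv_l in H; lra. }
  assert (HB2 : r <= B * (1 - r * q)).
  { pose proof (Rmax_r (INR N / q) (r / (1 - r * q))) as H. fold B in H.
    apply (Rmult_le_compat_r (1 - r * q)) in H; [|lra].
    unfold Rdiv in H. rewrite Rmult_assoc, Rinv_l in H; lra. }
  pose proof (pos_INR m). pose proof (pos_INR N).
  set (n := Z.to_nat (up (INR m * q))).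
  assert (Hn1 : INR m * q < INR n) by apply INR_up_gt.
  assert (Hn2 : INR n <= INR m * q + 1) by (apply INR_up_le; nra).
  assert (HnN : (n >= N)%nat) by (assert (INR N < INR n) by nra; apply INR_lt in H1; lia).
  assert (Hnr : 0 <= INR n * r) by (pose proof (pos_INR n); nra).
  assert (Hbud : (budget (INR n * r) <= m)%nat).
  { pose proof (budget_range (INR n * r) Hnr). apply INR_le. nra. }
  specialize (HN n HnN). unfold R_dist in *. rewrite Rminus_0_r in *.
  pose proof (prob_gt_nonneg MX PX HPX m (thresh m kap)).
  pose proof (prob_gt_nonneg MX PX HPX (budget (INR n * r)) (thresh n lam)).
  rewrite Rabs_right in * by lra.
  replace m with (budget (INR n * r) + (m - budget (INR n * r)))%nat at 1 by lia.
  eapply Rle_lt_trans; [|exact HN]. apply prob_gt_extend; auto.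
  apply thresh_le. rewrite <- Hq. nra.
Qed.

Theorem converse_Hbar hX hY r : Hbar MX PX hX -> hX > 0 -> Hbar MY PY hY ->
  achievable MX PX MY PY r -> hY / hX <= r.
Proof.
  intros HbX HhX HbY Ha. pose proof (achievable_nonneg _ _ _ _ r Ha) as Hr0.
  destruct Ha as [phi [Hg Hc]].
  destruct (Rle_dec (hY / hX) r) as [|Hlt]; auto. exfalso.
  assert (Hlt' : r * hX < hY).
  { apply (Rmult_lt_reg_r (/ hX)); [apply Rinv_0_lt_compat; lra|].
    rewrite Rmult_assoc, Rinv_r by lra. lra. }
  set (lam := (r * hX + hY) / 2).
  apply (Hbar_below MY PY HPY hY lam HbY ltac:(unfold lam; lra)).
  apply (Un_cv_squeeze _ (fun n => prob_le MX PX (budget (INR n * r)) (thresh n lam)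
                                   + prob_stop_gt MX PX (phi n) (INR n * r)) 0%nat).
  - intros n _. pose proof (pos_INR n).
    split; [apply prob_le_nonneg; auto|apply converse_le; auto; nra].
  - replace 0 with (0 + 0) by lra. apply CV_plus; auto.
    apply (coin_prob_le_vanishes hX); auto. unfold lam; lra.
Qed.

Theorem converse_Hund hY lX r : Hund MY PY hY -> Hund MX PX lX -> lX > 0 ->
  achievable MX PX MY PY r -> hY / lX <= r.
Proof.
  intros HuY HuX HlX Ha. pose proof (achievable_nonneg _ _ _ _ r Ha) as Hr0.
  destruct Ha as [phi [Hg Hc]].
  destruct (Rle_dec (hY / lX) r) as [|Hlt]; auto. exfalso.
  assert (Hlt' : r * lX < hY).
  { apply (Rmult_lt_reg_r (/ lX)); [apply Rinv_0_lt_compat; lra|].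
    rewrite Rmult_assoc, Rinv_r by lra. lra. }
  set (lam := (r * lX + hY) / 2).
  set (kap := lX + (lam - r * lX) / (2 * (r + 1))).
  assert (Hd : 0 < (lam - r * lX) / (2 * (r + 1))) by (apply Rdiv_lt_0_compat; unfold lam; lra).
  assert (Hrk : r * kap < lam).
  { assert (r * ((lam - r * lX) / (2 * (r + 1))) <= (lam - r * lX) / 2); [|unfold kap, lam in *; nra].
    unfold Rdiv. rewrite <- Rmult_assoc. apply (Rmult_le_reg_r (2 * (r + 1))); [lra|].
    rewrite Rmult_assoc, Rinv_l by lra. unfold lam; nra. }
  apply (Hund_above MX PX HPX lX kap HuX ltac:(unfold kap; lra)).
  apply (coin_prob_gt_reindex r lam); auto; [unfold kap; lra|].
  apply (Un_cv_squeeze _ (fun n => prob_gt MY PY n (thresh n lam)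
                                   + prob_stop_gt MX PX (phi n) (INR n * r)) 0%nat).
  - intros n _. pose proof (pos_INR n).
    split; [apply prob_gt_nonneg; auto|apply converse_gt; auto; nra].
  - replace 0 with (0 + 0) by lra. apply CV_plus; auto.
    apply (Hund_below MY PY HPY hY); auto. unfold lam; lra.
Qed.

End Converse.

(** ** The interval algorithm *)

Lemma subsetb_true a p c q : 0 < p ->
  subsetb (a, a + p) (c, c + q) = true <-> c <= a /\ a + p <= c + q.
Proof.
  intros Hp. unfold subsetb. destruct (Rle_dec (a + p) a); [lra|].
  destruct (Rle_dec c a), (Rle_dec (a + p) (c + q)); split; intros; try lra; try discriminate; auto.
Qed.

Section IntervalAlgorithm.
Variables (MX : nat) (PX : list nat -> R) (MY : nat) (PY : list nat -> R).
Hypothesis HPX : is_process MX PX.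
Hypothesis HPY : is_process MY PY.

(* Below, [I_s = [left_end PX s, left_end PX s + PX s)] is the coin interval of
   [s] and [J_y = [left_end PY y, left_end PY y + PY y)] the target interval of [y]. *)

Section FixedLength.
Variable n : nat.
Notation phi := (interval_alg PX MY PY n).

Lemma interval_alg_output s y : phi s = Some y ->
  In y (words MY n) /\ subsetb (interval PX s) (interval PY y) = true.
Proof. intros H. apply find_some in H. auto. Qed.

Lemma first_output_inside s y : valid MX s -> 0 < PX s -> first_output phi s = Some y ->
  In y (words MY n) /\ left_end PY y <= left_end PX s /\ left_end PX s + PX s <= left_end PY y + PY y.
Proof.
  intros Hs Hp Hf. apply first_output_prefix in Hf as [k [_ Hk]].
  apply interval_alg_output in Hk as [Hin Hsub]. split; auto. apply In_words in Hin as [_ Hy].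
  set (s' := firstn k s) in *. assert (Hs' : valid MX s') by (apply valid_firstn; auto).
  assert (Happ : s = s' ++ skipn k s) by (symmetry; apply firstn_skipn).
  pose proof (left_end_nest MX PX HPX s' (skipn k s) ltac:(rewrite <- Happ; auto)) as [N1 N2].
  rewrite <- Happ in N1, N2.
  rewrite (interval_closed MX PX HPX s' Hs'), (interval_closed MY PY HPY y Hy) in Hsub.
  apply subsetb_true in Hsub as [S1 S2]; lra.
Qed.

(** Conversely, a nonempty coin interval inside [J_y] has produced exactly [y]:
    since the target intervals tile [[0,1)], it lies inside no other one. *)
Lemma inside_first_output s y : valid MX s -> 0 < PX s -> In y (words MY n) ->
  left_end PY y <= left_end PX s -> left_end PX s + PX s <= left_end PY y + PY y ->
  first_output phi s = Some y.
Proof.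
  intros Hs Hp Hin H1 H2. pose proof (left_end_range MX PX HPX s Hs) as [A0 A1].
  assert (Hstop : exists z, phi s = Some z).
  { unfold interval_alg. destruct (find _ _) eqn:E; eauto. exfalso.
    pose proof (find_none _ _ E y Hin) as Hf. apply In_words in Hin as [_ Hy].
    rewrite (interval_closed MX PX HPX s Hs), (interval_closed MY PY HPY y Hy),
      (proj2 (subsetb_true _ _ _ _ Hp) (conj H1 H2)) in Hf. discriminate. }
  destruct Hstop as [z Hz]. pose proof (first_output_some _ _ _ Hz) as Hfs.
  destruct (first_output phi s) as [y'|] eqn:E; [|discriminate].
  destruct (first_output_inside s y' Hs Hp E) as [Hin' [C1 C2]].
  destruct (list_eq_dec Nat.eq_dec y' y) as [->|Hne]; auto. exfalso.
  pose proof (words_two_terms MY n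
    (fun y0 => overlap (left_end PX s) (left_end PX s + PX s) (left_end PY y0) (left_end PY y0 + PY y0))
     y y' Hin Hin' (fun e => Hne (eq_sym e)) (fun _ _ => overlap_nonneg _ _ _ _)) as H.
  rewrite (overlap_partition MY PY HPY) in H by lra. rewrite !overlap_inside in H by lra. lra.
Qed.

Lemma output_le_overlap s y : valid MX s -> In y (words MY n) ->
  outputs y (first_output phi s) * PX s
  <= overlap (left_end PX s) (left_end PX s + PX s) (left_end PY y) (left_end PY y + PY y).
Proof.
  intros Hs Hin. pose proof (overlap_nonneg (left_end PX s) (left_end PX s + PX s)
    (left_end PY y) (left_end PY y + PY y)). pose proof (P_nonneg MX PX HPX s Hs).
  unfold outputs. destruct (first_output phi s) as [y'|] eqn:E; [|lra].
  destruct (list_eq_dec Nat.eq_dec y' y) as [->|]; [|lra].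
  destruct (Req_dec (PX s) 0) as [Hz|Hz]; [rewrite Hz in *; lra|].
  destruct (first_output_inside s y Hs ltac:(lra) E) as [_ [C1 C2]].
  rewrite overlap_inside; lra.
Qed.

Lemma overlap_le_output s y e : valid MX s -> In y (words MY n) -> 0 < e ->
  overlap (left_end PX s) (left_end PX s + PX s) (left_end PY y) (left_end PY y + PY y)
  - outputs y (first_output phi s) * PX s
  <= (if Rle_dec (PX s) e then 0 else PX s)
     + near_overlap e (left_end PY y) (left_end PX s) (left_end PX s + PX s)
     + near_overlap e (left_end PY y + PY y) (left_end PX s) (left_end PX s + PX s).
Proof.
  intros Hs Hin He. pose proof (P_nonneg MX PX HPX s Hs).
  assert (Hy : valid MY y) by (apply In_words in Hin; tauto).
  pose proof (left_end_range MX PX HPX s Hs). pose proof (left_end_range MY PY HPY y Hy).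
  pose proof (P_nonneg MY PY HPY y Hy).
  pose proof (outputs_nonneg y (first_output phi s)).
  pose proof (near_overlap_nonneg e (left_end PY y) (left_end PX s) (left_end PX s + PX s)).
  pose proof (near_overlap_nonneg e (left_end PY y + PY y) (left_end PX s) (left_end PX s + PX s)).
  pose proof (overlap_le (left_end PX s) (left_end PX s + PX s) (left_end PY y) (left_end PY y + PY y)
    ltac:(lra)).
  assert (0 <= outputs y (first_output phi s) * PX s) by nra.
  destruct (Rle_dec (PX s) e); [|lra].
  destruct (Req_dec (PX s) 0) as [Hz|Hz]; [rewrite Hz in *; lra|].
  destruct (classic (left_end PY y <= left_end PX s /\
                     left_end PX s + PX s <= left_end PY y + PY y)) as [[C1 C2]|Hnot].
  - rewrite (inside_first_output s y) by (auto; lra). unfold outputs.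
    destruct (list_eq_dec Nat.eq_dec y y); [|congruence]. rewrite overlap_inside; lra.
  - pose proof (overlap_straddle (left_end PX s) (left_end PX s + PX s)
      (left_end PY y) (left_end PY y + PY y) e ltac:(lra) ltac:(lra) ltac:(lra) ltac:(lra) Hnot).
    lra.
Qed.

(** The interval algorithm is a valid generator when [Hund(X) > 0]: the mass
    of coin words of length [m] that produced [y] tends to [P_Y(y)], with an
    error at most [Pr(P_X(X^m) > e) + 4 e] for [e = 2^(-m k)], [0 < k < Hund(X)]. *)
Theorem interval_alg_valid lX : Hund MX PX lX -> lX > 0 -> gen_alg MX PX MY PY n phi.
Proof.
  intros HuX HlX. split.
  { intros s y Hs H. apply interval_alg_output in H as [Hin _]. apply In_words in Hin; auto. }
  intros y Hl Hv. assert (Hin : In y (words MY n)) by (apply In_words; auto).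
  pose proof (left_end_range MY PY HPY y Hv). pose proof (P_nonneg MY PY HPY y Hv).
  set (k := lX / 2).
  assert (Hc : Un_cv (fun m => prob_gt MX PX m (thresh m k) + 4 * thresh m k) 0).
  { replace 0 with (0 + 4 * 0) by lra. apply CV_plus; [apply (Hund_below MX PX HPX lX); auto; unfold k; lra|].
    apply CV_mult; [|apply thresh_cv; unfold k; lra].
    intros eps He; exists 0%nat; intros; unfold R_dist; rewrite Rminus_diag, Rabs_R0; lra. }
  intros eps He. destruct (Hc eps He) as [N HN]. exists N. intros m Hm.
  specialize (HN m Hm). rewrite leaf_mass_to_sum by auto.
  set (T := sumR (fun s => outputs y (first_output phi s) * PX s) (words MX m)).
  pose proof (thresh_pos m k).
  set (ov s := overlap (left_end PX s) (left_end PX s + PX s) (left_end PY y) (left_end PY y + PY y)).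
  assert (Hov : sumR ov (words MX m) = PY y)
    by (unfold ov; rewrite (overlap_partition_sym MX PX HPX); lra).
  assert (HU : T <= PY y).
  { rewrite <- Hov. apply sumR_le; intros s Hs. apply output_le_overlap; auto. apply In_words in Hs; tauto. }
  assert (HLo : PY y - T <= prob_gt MX PX m (thresh m k) + 4 * thresh m k).
  { rewrite <- Hov. unfold T. rewrite <- sumR_minus.
    eapply Rle_trans.
    { apply sumR_le; intros s Hs. apply (overlap_le_output s y (thresh m k)); auto.
      apply In_words in Hs; tauto. }
    rewrite !sumR_plus.
    pose proof (near_overlap_sum MX PX HPX (thresh m k) (left_end PY y) m ltac:(lra) H1).
    pose proof (near_overlap_sum MX PX HPX (thresh m k) (left_end PY y + PY y) m ltac:(lra) H1).
    unfold prob_gt. lra. }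
  unfold R_dist in *. rewrite Rminus_0_r in HN.
  pose proof (Rle_abs (prob_gt MX PX m (thresh m k) + 4 * thresh m k)).
  rewrite Rabs_left1 by lra. lra.
Qed.

(** Bound on the part of [I_s] not yet covered by target intervals: pieces in
    improbable targets ([P_Y(y) <= del]) plus pieces near target endpoints. *)
Definition uncovered_bound (e del a b : R) : R :=
  sumR (fun y => if Rle_dec (PY y) del
                 then overlap a b (left_end PY y) (left_end PY y + PY y)
                 else near_overlap e (left_end PY y) a b + near_overlap e (left_end PY y + PY y) a b)
       (words MY n).

Lemma unstopped_le s e del : 0 < e -> valid MX s ->
  (if is_some (phi s) then 0 else 1) * PX s
  <= (if Rle_dec (PX s) e then 0 else PX s)
     + uncovered_bound e del (left_end PX s) (left_end PX s + PX s).
Proof.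
  intros He Hs. pose proof (P_nonneg MX PX HPX s Hs). pose proof (left_end_range MX PX HPX s Hs).
  assert (Hub : 0 <= uncovered_bound e del (left_end PX s) (left_end PX s + PX s)).
  { apply sumR_nonneg; intros. destruct (Rle_dec _ _);
      [apply overlap_nonneg|apply Rplus_le_le_0_compat; apply near_overlap_nonneg]. }
  destruct (phi s) eqn:E; simpl; [destruct (Rle_dec (PX s) e); lra|].
  destruct (Rle_dec (PX s) e) as [Hle|]; [|lra].
  destruct (Req_dec (PX s) 0) as [Hz|Hz]; [rewrite Hz in *; lra|].
  assert (Hsum : sumR (fun y => overlap (left_end PX s) (left_end PX s + PX s)
                                  (left_end PY y) (left_end PY y + PY y)) (words MY n) = PX s)
    by (rewrite (overlap_partition MY PY HPY); lra).
  assert (Hp : 0 < PX s) by (destruct H; [auto|congruence]).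
  rewrite Rmult_1_l, Rplus_0_l, <- Hsum at 1. apply sumR_le. intros y Hy.
  assert (Hsub : subsetb (interval PX s) (interval PY y) = false) by (apply (find_none _ _ E); auto).
  apply In_words in Hy as [_ Hy].
  rewrite (interval_closed MX PX HPX s Hs), (interval_closed MY PY HPY y Hy) in Hsub.
  pose proof (left_end_range MY PY HPY y Hy). pose proof (P_nonneg MY PY HPY y Hy).
  destruct (Rle_dec (PY y) del); [lra|].
  apply overlap_straddle; try lra.
  intros Hin. rewrite (proj2 (subsetb_true _ _ _ _ Hp) Hin) in Hsub. discriminate.
Qed.

(** The endpoint
    neighbourhoods of a target [y] with [P_Y(y) > del] carry at most
    [4 e <= (4 e / del) P_Y(y)] of coin mass. *)
Lemma unstopped_mass_bound m e del : 0 < e -> 0 < del ->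
  sumR (fun s => (if is_some (phi s) then 0 else 1) * PX s) (words MX m)
  <= prob_gt MX PX m e + prob_le MY PY n del + 4 * e / del.
Proof.
  intros He Hd.
  eapply Rle_trans.
  { apply sumR_le; intros s Hs. apply In_words in Hs as [_ Hs]. apply (unstopped_le s e del He Hs). }
  rewrite sumR_plus, Rplus_assoc. apply Rplus_le_compat_l.
  unfold uncovered_bound. rewrite sumR_swap.
  assert (Hcoef : 0 <= 4 * e / del) by (apply Rmult_le_pos; [lra|left; apply Rinv_0_lt_compat; auto]).
  eapply Rle_trans with
    (sumR (fun y => (if Rle_dec (PY y) del then PY y else 0) + 4 * e / del * PY y) (words MY n)).
  - apply sumR_le; intros y Hy. apply In_words in Hy as [_ Hy].
    pose proof (left_end_range MY PY HPY y Hy). pose proof (P_nonneg MY PY HPY y Hy).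
    destruct (Rle_dec (PY y) del).
    + rewrite (overlap_partition_sym MX PX HPX) by lra. nra.
    + rewrite sumR_plus.
      pose proof (near_overlap_sum MX PX HPX e (left_end PY y) m ltac:(lra) He).
      pose proof (near_overlap_sum MX PX HPX e (left_end PY y + PY y) m ltac:(lra) He).
      assert (4 * e <= 4 * e / del * PY y); [|lra].
      replace (4 * e / del * PY y) with (4 * e * (PY y / del)) by (field; lra).
      assert (1 <= PY y / del); [|nra].
      apply (Rmult_le_reg_l del); auto. replace (del * (PY y / del)) with (PY y) by (field; lra). lra.
  - rewrite sumR_plus, sumR_scal, (P_total MY PY HPY). unfold prob_le. lra.
Qed.

Lemma prob_stop_gt_le_unstopped t : 0 <= t ->
  prob_stop_gt MX PX phi t
  <= sumR (fun s => (if is_some (phi s) then 0 else 1) * PX s) (words MX (budget t)).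
Proof.
  intros Ht. rewrite prob_stop_gt_sum by auto.
  rewrite <- (P_total MX PX HPX (budget t)) at 1. rewrite <- sumR_minus.
  apply sumR_le; intros s Hs. apply In_words in Hs as [_ Hs]. pose proof (P_nonneg MX PX HPX s Hs).
  unfold stopped. destruct (phi s) eqn:E; simpl.
  - rewrite (first_output_some _ _ _ E). lra.
  - destruct (is_some _); lra.
Qed.

End FixedLength.

(** With [r kap > lam], the ratio [2^(-budget(n r) kap) / 2^(-n lam)] vanishes:
    it is at most [2^kap 2^(-n (r kap - lam))]. *)
Lemma thresh_ratio_cv r kap lam : 0 < r -> 0 < kap -> lam < r * kap ->
  Un_cv (fun n => thresh (budget (INR n * r)) kap / thresh n lam) 0.
Proof.
  intros Hr Hk Hl. pose proof ln2_pos.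
  apply (Un_cv_squeeze _ (fun n => exp (kap * ln 2) * thresh n (r * kap - lam)) 0%nat).
  - intros n _. split; [left; apply Rdiv_lt_0_compat; apply thresh_pos|].
    pose proof (pos_INR n). pose proof (budget_range (INR n * r) ltac:(nra)) as [Hb _].
    unfold thresh, Rdiv. rewrite <- exp_Ropp, <- !exp_plus. apply exp_le_iff.
    assert ((INR n * r - 1) * kap <= INR (budget (INR n * r)) * kap) by (apply Rmult_le_compat_r; lra).
    nra.
  - replace 0 with (exp (kap * ln 2) * 0) by ring. apply CV_mult; [|apply thresh_cv; lra].
    intros eps He; exists 0%nat; intros; unfold R_dist; rewrite Rminus_diag, Rabs_R0; lra.
Qed.

(** Take [Hbar(Y) < lam < r kap], [kap < Hund(X)], [d = 2^(-n lam)]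
    and [e = 2^(-m kap)] with [m = budget (n r)] in [unstopped_mass_bound]. *)
Theorem interval_alg_achieves hY lX r : Hbar MY PY hY -> Hund MX PX lX -> lX > 0 -> r > hY / lX ->
  int_achievable MX PX MY PY r.
Proof.
  intros HbY HuX HlX Hr. pose proof (Hbar_nonneg MY PY HPY hY HbY) as HhY.
  assert (Hlt : hY < r * lX).
  { apply (Rmult_lt_reg_r (/ lX)); [apply Rinv_0_lt_compat; lra|].
    rewrite Rmult_assoc, Rinv_r by lra. lra. }
  assert (Hr0 : 0 < r) by nra.
  set (lam := (hY + r * lX) / 2).
  set (kap := (lX + lam / r) / 2).
  assert (Hlr : lam / r < lX).
  { apply (Rmult_lt_reg_r r); auto. unfold Rdiv. rewrite Rmult_assoc, Rinv_l; unfold lam; lra. }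
  assert (Hlr0 : 0 < lam / r) by (apply Rdiv_lt_0_compat; unfold lam; lra).
  assert (Hrk : lam < r * kap).
  { assert (lam = r * (lam / r)) by (field; lra). unfold kap. nra. }
  set (m n := budget (INR n * r)).
  apply (Un_cv_squeeze _ (fun n => prob_gt MX PX (m n) (thresh (m n) kap) + prob_le MY PY n (thresh n lam)
                                   + 4 * (thresh (m n) kap / thresh n lam)) 0%nat).
  - intros n _. pose proof (pos_INR n).
    split; [apply prob_stop_gt_nonneg; auto; nra|].
    eapply Rle_trans; [apply prob_stop_gt_le_unstopped; nra|].
    unfold Rdiv. rewrite <- Rmult_assoc. apply unstopped_mass_bound; apply thresh_pos.
  - replace 0 with (0 + 0 + 4 * 0) by lra. apply CV_plus; [apply CV_plus|].
    + intros eps He. destruct (Hund_below MX PX HPX lX kap HuX ltac:(unfold kap; lra) eps He) as [K HK].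
      destruct (budget_grows r Hr0 K) as [N HN]. exists N. intros n Hn. apply HK, HN; auto.
    + apply (Hbar_above MY PY HPY hY); auto. unfold lam; lra.
    + apply CV_mult; [|apply thresh_ratio_cv; auto; unfold kap; lra].
      intros eps He; exists 0%nat; intros; unfold R_dist; rewrite Rminus_diag, Rabs_R0; lra.
Qed.

End IntervalAlgorithm.

Lemma optimal_rates MX PX MY PY t :
  (forall n, gen_alg MX PX MY PY n (interval_alg PX MY PY n)) ->
  (forall r, achievable MX PX MY PY r -> t <= r) ->
  (forall r, r > t -> int_achievable MX PX MY PY r) ->
  is_inf (int_achievable MX PX MY PY) t /\ is_inf (achievable MX PX MY PY) t.
Proof.
  intros Hvalid Hlow Hup.
  assert (Hint_ach : forall r, int_achievable MX PX MY PY r -> achievable MX PX MY PY r)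
    by (intros r Hr; exists (interval_alg PX MY PY); split; auto).
  assert (Hglb : forall E : R -> Prop, (forall r, r > t -> E r) ->
                 forall m', (forall x, E x -> m' <= x) -> m' <= t).
  { intros E HE m' Hm. destruct (Rle_dec m' t); auto.
    assert (m' <= (t + m') / 2) by (apply Hm, HE; lra). lra. }
  split; split.
  - intros r Hr. apply Hlow, Hint_ach, Hr.
  - apply Hglb, Hup.
  - exact Hlow.
  - apply Hglb. intros r Hr. apply Hint_ach, Hup, Hr.
Qed.

Theorem corollary3 (MX : nat) (PX : list nat -> R) (MY : nat) (PY : list nat -> R) :
  is_process MX PX -> is_process MY PY ->
  (* (i) *)
  (forall hX hY : R,
     Hbar MX PX hX -> Hund MX PX hX -> Hrate MX PX hX -> hX > 0 ->
     Hbar MY PY hY ->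
     is_inf (int_achievable MX PX MY PY) (hY / hX) /\
     is_inf (achievable MX PX MY PY) (hY / hX)) /\
  (* (ii) *)
  (forall hY lX : R,
     Hbar MY PY hY -> Hund MY PY hY -> Hrate MY PY hY ->
     Hund MX PX lX -> lX > 0 ->
     is_inf (int_achievable MX PX MY PY) (hY / lX) /\
     is_inf (achievable MX PX MY PY) (hY / lX)).
Proof.
  intros HPX HPY. split.
  - intros hX hY HbX HuX _ HhX HbY. apply optimal_rates.
    + intros n. apply (interval_alg_valid MX PX MY PY HPX HPY n hX); auto.
    + intros r. apply (converse_Hbar MX PX MY PY HPX HPY hX hY r); auto.
    + intros r. apply (interval_alg_achieves MX PX MY PY HPX HPY hY hX r); auto.
  - intros hY lX HbY HuY _ HuX HlX. apply optimal_rates.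
    + intros n. apply (interval_alg_valid MX PX MY PY HPX HPY n lX); auto.
    + intros r. apply (converse_Hund MX PX MY PY HPX HPY hY lX r); auto.
    + intros r. apply (interval_alg_achieves MX PX MY PY HPX HPY hY lX r); auto.
Qed.
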